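(* Let $S=[S_1,\ldots,S_m]$ be a sequence of propositional formulae and let $S_i$ be one of its formulae. Then $S \cdot [S_i] \equiv S$ and $S \cdot [\neg S_i] \equiv S$.
   Context: Models are truth assignments. For a formula $G$: $I \leq_G J$ iff $I \models G$ or $J \not\models G$. For a sequence $S=[S_1,\ldots,S_m]$: $I \leq_S J$ iff either $S=[]$, or ($I \leq_{S_1} J$ and (either $J \not\leq_{S_1} I$ or $I \leq_R J$)), where $R=[S_2,\ldots,S_m]$. For sequences, $S\equiv R$ means $I \leq_S J$ and $I\leq_R J$ coincide for all pairs of models $I,J$. $S\cdot R$ denotes concatenation of sequences. *)

From Stdlib Require Import List.
Import ListNotations.

Inductive form : Type :=
| FVar : nat -> form
| FTrue : form
| FFalse : form
| FNot : form -> form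
| FAnd : form -> form -> form
| FOr : form -> form -> form
| FImp : form -> form -> form.

Definition model := nat -> bool.

Fixpoint sat (I : model) (G : form) : Prop :=
  match G with
  | FVar n => I n = true
  | FTrue => True
  | FFalse => False
  | FNot A => ~ sat I A
  | FAnd A B => sat I A /\ sat I B
  | FOr A B => sat I A \/ sat I B
  | FImp A B => sat I A -> sat I B
  end.

Definition le_form (G : form) (I J : model) : Prop :=
  sat I G \/ ~ sat J G.

Fixpoint le_seq (S : list form) (I J : model) : Prop :=
  match S with
  | [] => True
  | S1 :: R =>
      le_form S1 I J /\ (~ le_form S1 J I \/ le_seq R I J)
  end.

Definition seq_equiv (S R : list form) : Prop :=
  forall I J : model, le_seq S I J <-> le_seq R I J.

(* A comparison by a sequence is settled at the first formula on which the
   two models differ.  If they differ on [S_i], that happens inside [S], so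
   an appended formula is never consulted.  If they agree on [S_i], they also
   agree on [S_i] and on [~ S_i], and a formula on which two models agree
   relates them in both directions, so appending it changes nothing. *)

From Stdlib Require Import List Classical.
Import ListNotations.

Lemma le_form_agree (A : form) (I J : model) :
  (sat I A <-> sat J A) -> le_form A I J.
Proof.
  intros HIJ; unfold le_form.
  destruct (classic (sat J A)); tauto.
Qed.

Lemma le_seq_cons_separated (A : form) (R : list form) (I J : model) :
  ~ (sat I A <-> sat J A) -> (le_seq (A :: R) I J <-> le_form A I J).
Proof.
  intros HIJ; simpl; unfold le_form.
  destruct (classic (sat I A)), (classic (sat J A)); tauto.
Qed.

Lemma le_seq_app_tail (S T : list form) (I J : model) :
  le_seq T I J -> (le_seq (S ++ T) I J <-> le_seq S I J).
Proof.
  intros HT; induction S as [|A S IH]; simpl.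
  - tauto.
  - rewrite IH; tauto.
Qed.

Lemma le_seq_app_separated (S T : list form) (A : form) (I J : model) :
  In A S -> ~ (sat I A <-> sat J A) -> (le_seq (S ++ T) I J <-> le_seq S I J).
Proof.
  intros HA HIJ; induction S as [|B S IH]; simpl in HA.
  - contradiction.
  - destruct HA as [<- | HA].
    + rewrite <- app_comm_cons, !le_seq_cons_separated by exact HIJ; tauto.
    + simpl; rewrite IH by exact HA; tauto.
Qed.

Lemma seq_equiv_app_agree (S : list form) (A B : form) :
  In A S ->
  (forall I J : model, (sat I A <-> sat J A) -> (sat I B <-> sat J B)) ->
  seq_equiv (S ++ [B]) S.
Proof.
  intros HA HAB I J.
  destruct (classic (sat I A <-> sat J A)) as [Hagree | Hsep].
  - apply le_seq_app_tail; simpl.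
    split; [apply le_form_agree, HAB, Hagree | right; trivial].
  - exact (le_seq_app_separated S [B] A I J HA Hsep).
Qed.

Theorem theorem8 (S : list form) (Si : form) :
  In Si S ->
  seq_equiv (S ++ [Si]) S /\ seq_equiv (S ++ [FNot Si]) S.
Proof.
  intros Hin; split; apply (seq_equiv_app_agree S Si); simpl; tauto.
Qed.
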